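(* Let $K$ be the maximum number of constructors of any datatype and $D$ the maximum number of datatypes in any slice. Then the number of distinct atomic constraints whose refinement variables are among a given set of $v$ refinement variables is $\mathcal{O}(K v^2 D \cdot 2^{vKD+K})$.
   Context: There is a finite set of datatype identifiers. Each datatype $d$ has a finite set $\mathrm{Con}(d)$ of constructors, and each constructor has a list of argument types that may mention other datatypes. The slice of $d$ is the least set of datatypes containing $d$ and closed under ''occurs in an argument type of a constructor of''. Each refinement variable $X$ is associated with a single slice, and the pairs $X(d)$ are formed only with $d$ in that slice. A constructor set expression over $d$ is either a finite set $\{k_1,\dots,k_m\} \subseteq \mathrm{Con}(d)$ or a pair $X(d)$. A constraint $\phi \mathbin{?} S_1 \subseteq S_2$ consists of a finite guard $\phi$ of membership facts $k \in X(d)$ and a body inclusion $S_1 \subseteq S_2$ between expressions over the same datatype. It is atomic if its body has one of the forms $X(d) \subseteq Y(d)$, $X(d) \subseteq \{k_1,\dots,k_m\}$, $k \in X(d)$, or $k \in \emptyset$. *)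

From mathcomp Require Import all_boot.
Set Implicit Arguments. Unset Strict Implicit. Unset Printing Implicit Defensive.

Section Constraints.
(* dt  : the finite set of datatype identifiers
   con : all constructors (of all datatypes); [owner k] is the datatype
         whose constructor k is, so Con(d) = [set k | owner k == d]
   args k : the list of argument types of constructor k, each argument type
         being represented by the list of datatypes occurring in it
   V   : the given finite set of refinement variables; [root X] is the
         datatype whose slice X is associated with. *)
Variables (dt con V : finType) (owner : con -> dt) (args : con -> seq (seq dt))
          (root : V -> dt).

Definition Con (d : dt) : {set con} := [set k | owner k == d].

Definition slice_closed (S : {set dt}) : bool :=
  [forall d1 in S, forall k : con,
     (owner k == d1) ==> all (fun a => all (fun d2 => d2 \in S) a) (args k)].

Definition slice (d : dt) : {set dt} :=
  \bigcap_(S : {set dt} | (d \in S) && slice_closed S) S.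

Definition maxK : nat := \max_(d : dt) #|Con d|.
Definition maxD : nat := \max_(d : dt) #|slice d|.

(* membership fact  k \in X(d)  *)
Definition fact := (con * V * dt)%type.
(* constructor set expression: a finite constructor set, or a pair X(d) *)
Definition sexpr := ({set con} + (V * dt))%type.
(* constraint  phi ? S1 <= S2 , both expressions being over datatype d *)
Definition constraint := ({set fact} * sexpr * sexpr * dt)%type.

Definition wf_fact (f : fact) : bool :=
  let: (k, X, d) := f in (d \in slice (root X)) && (owner k == d).

Definition wf_sexpr (d : dt) (e : sexpr) : bool :=
  match e with
  | inl A => A \subset Con d
  | inr (X, d') => (d' == d) && (d \in slice (root X))
  end.

Definition wf_constraint (c : constraint) : bool :=
  let: (phi, S1, S2, d) := c in
  [forall f in phi, wf_fact f] && wf_sexpr d S1 && wf_sexpr d S2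
  (* the datatype of the body lies in the slice of one of the variables
     (automatic unless the body is  k \in emptyset) *)
  && [exists X : V, d \in slice (root X)].

(* atomic bodies: X(d) <= Y(d), X(d) <= {k1..km}, k \in X(d) (i.e. {k} <= X(d)),
   k \in emptyset (i.e. {k} <= emptyset) *)
Definition atomic (c : constraint) : bool :=
  let: (_, S1, S2, _) := c in
  match S1, S2 with
  | inr _, inr _ => true
  | inr _, inl _ => true
  | inl A, inr _ => #|A| == 1
  | inl A, inl B => (#|A| == 1) && (B == set0)
  end.

Definition atomic_constraints : {set constraint} :=
  [set c | wf_constraint c && atomic c].

End Constraints.

From mathcomp Require Import all_boot zify.

Set Implicit Arguments.
Unset Strict Implicit.
Unset Printing Implicit Defensive.

(* An atomic constraint is its guard, a subset of the at most v K D well-formed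
   membership facts, together with its body.  Every atomic body mentions a pair
   X(d) with d in the slice of X (at most v D choices; for [k \in emptyset] such
   a pair exists by well-formedness), and given that pair it is one of
   X(d) <= Y(d), X(d) <= B, k \in X(d), k \in emptyset: at most v + 2^K + 2K
   choices.  This gives 2^(vKD) * vD * (v + 2^K + 2K) <= 4 K v^2 D 2^(vKD+K). *)

Lemma leq_card_bigcup (I T : finType) (A : {set I}) (F : I -> {set T}) m c :
    #|A| <= m -> (forall i, i \in A -> #|F i| <= c) ->
  #|\bigcup_(i in A) F i| <= m * c.
Proof.
move=> leAm leFc; apply: leq_trans (_ : #|A| * c <= m * c); last exact: leq_mul.
rewrite -sum_nat_const.
apply: (big_ind2 (fun (S : {set T}) n => #|S| <= n)) => [|S1 n1 S2 n2 le1 le2|];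
  [by rewrite cards0 | | exact: leFc].
exact: leq_trans (leq_card_setU S1 S2).1 (leq_add le1 le2).
Qed.

Section AtomicConstraints.
Variables (dt con V : finType) (owner : con -> dt) (args : con -> seq (seq dt))
          (root : V -> dt).

Local Notation K := (maxK owner).
Local Notation D := (maxD owner args).
Local Notation slice := (slice owner args).

Lemma card_Con_le_maxK d : #|Con owner d| <= K.
Proof. exact: leq_bigmax. Qed.

Lemma card_slice_le_maxD d : #|slice d| <= D.
Proof. exact: leq_bigmax. Qed.

Definition slice_pairs : {set V * dt} := [set p | p.2 \in slice (root p.1)].

Lemma card_slice_pairs : #|slice_pairs| <= #|V| * D.
Proof.
have -> : slice_pairs = \bigcup_(X in [set: V]) [set (X, d) | d in slice (root X)].
  apply/setP => -[X d]; rewrite inE /=; apply/idP/bigcupP => [sXd|[Y _]].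
    by exists X; rewrite ?inE //; apply/imsetP; exists d.
  by case/imsetP => d' sYd' [-> ->].
apply: leq_card_bigcup => [|X _]; first by rewrite cardsT.
exact: leq_trans (leq_imset_card _ _) (card_slice_le_maxD _).
Qed.

Definition wf_facts : {set fact dt con V} := [set f | wf_fact owner args root f].

Lemma card_wf_facts : #|wf_facts| <= #|V| * K * D.
Proof.
have sub : wf_facts \subset
    \bigcup_(p in slice_pairs) [set (k, p.1, p.2) | k in Con owner p.2].
  apply/subsetP => -[[k X] d]; rewrite inE /= => /andP[sXd /eqP owner_k].
  apply/bigcupP; exists (X, d); first by rewrite inE.
  by apply/imsetP; exists k; rewrite ?inE ?owner_k.
rewrite mulnAC; apply: leq_trans (subset_leq_card sub) _.
apply: leq_card_bigcup => [|p _]; first exact: card_slice_pairs.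
exact: leq_trans (leq_imset_card _ _) (card_Con_le_maxK _).
Qed.

Definition body := (sexpr dt con V * sexpr dt con V * dt)%type.

Definition atomic_bodies (p : V * dt) : {set body} :=
  [set (inr p, inr (Y, p.2), p.2) | Y in [set: V]] :|:
  [set (inr p, inl B, p.2) | B in powerset (Con owner p.2)] :|:
  [set (inl [set k], inr p, p.2) | k in Con owner p.2] :|:
  [set (inl [set k], inl set0, p.2) | k in Con owner p.2].

Lemma card_atomic_bodies p : #|atomic_bodies p| <= #|V| + 2 ^ K + K + K.
Proof.
have card_Con_image (T : finType) (f : con -> T) :
    #|f @: Con owner p.2| <= K.
  exact: leq_trans (leq_imset_card _ _) (card_Con_le_maxK _).
rewrite /atomic_bodies; apply: leq_trans (leq_card_setU _ _).1 _.
apply: leq_add; last exact: card_Con_image.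
apply: leq_trans (leq_card_setU _ _).1 _.
apply: leq_add; last exact: card_Con_image.
apply: leq_trans (leq_card_setU _ _).1 _.
apply: leq_add; first by rewrite -[#|V|]cardsT leq_imset_card.
apply: leq_trans (leq_imset_card _ _) _.
by rewrite card_powerset leq_pexp2l ?card_Con_le_maxK.
Qed.

Lemma atomic_body_in phi S1 S2 d :
    (phi, S1, S2, d) \in atomic_constraints owner args root ->
  (S1, S2, d) \in \bigcup_(p in slice_pairs) atomic_bodies p.
Proof.
rewrite inE /= => /andP[/andP[/andP[/andP[_ wf1] wf2] /existsP[X0 sX0d]] at_c].
have in_slice_pairs X : d \in slice (root X) -> (X, d) \in slice_pairs.
  by rewrite inE.
have singleton_Con (A : {set con}) : A \subset Con owner d -> #|A| == 1 ->
    exists2 k, k \in Con owner d & A = [set k].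
  by move=> /subsetP subA /cards1P[k eA]; exists k; rewrite // subA // eA set11.
rewrite /atomic_bodies; case: S1 wf1 at_c => [A | [X d']] /= wf1 at_c.
- case: S2 wf2 at_c => [B | [Y d']] /= wf2 at_c.
  + case/andP: at_c => /(singleton_Con _ wf1)[k Ck ->] /eqP ->.
    apply/bigcupP; exists (X0, d); first exact: in_slice_pairs.
    by apply/setUP; right; apply/imsetP; exists k.
  + case/andP: wf2 => /eqP -> sYd; case: (singleton_Con _ wf1 at_c) => k Ck ->.
    apply/bigcupP; exists (Y, d); first exact: in_slice_pairs.
    by apply/setUP; left; apply/setUP; right; apply/imsetP; exists k.
- case/andP: wf1 => /eqP -> sXd; apply/bigcupP; exists (X, d).
    exact: in_slice_pairs.
  case: S2 wf2 at_c => [B | [Y d'']] /= wf2 _.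
  + do 2 (apply/setUP; left); apply/setUP; right.
    by apply/imsetP; exists B; rewrite ?powersetE.
  + case/andP: wf2 => /eqP -> _; do 3 (apply/setUP; left).
    by apply/imsetP; exists Y; rewrite ?inE.
Qed.

Definition attach_guard (gb : {set fact dt con V} * body) : constraint dt con V :=
  (gb.1, gb.2.1.1, gb.2.1.2, gb.2.2).

Lemma atomic_constraints_sub :
  atomic_constraints owner args root \subset
    attach_guard @: setX (powerset wf_facts)
                         (\bigcup_(p in slice_pairs) atomic_bodies p).
Proof.
apply/subsetP => -[[[phi S1] S2] d] at_c; apply/imsetP.
exists (phi, (S1, S2, d)) => //; rewrite inE /= (atomic_body_in at_c) andbT.
move: at_c; rewrite inE /= powersetE.
move=> /andP[/andP[/andP[/andP[/forall_inP wf_phi _] _] _] _].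
by apply/subsetP => f /wf_phi; rewrite inE.
Qed.

Lemma card_atomic_constraints_le :
  #|atomic_constraints owner args root| <=
    2 ^ (#|V| * K * D) * (#|V| * D * (#|V| + 2 ^ K + K + K)).
Proof.
apply: leq_trans (subset_leq_card atomic_constraints_sub) _.
apply: leq_trans (leq_imset_card _ _) _.
rewrite cardsX card_powerset; apply: leq_mul.
  by rewrite leq_pexp2l // card_wf_facts.
apply: leq_card_bigcup => [|p _]; [exact: card_slice_pairs | exact: card_atomic_bodies].
Qed.

End AtomicConstraints.

Lemma leq_add_mul4 v K Q : 0 < v -> 0 < K -> K <= Q -> v + Q + K + K <= 4 * K * v * Q.
Proof.
move=> v_gt0 K_gt0 leKQ.
have vQ_gt0 : 0 < v * Q by rewrite muln_gt0 v_gt0 (leq_trans K_gt0 leKQ).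
have KQ_gt0 : 0 < K * Q by rewrite muln_gt0 K_gt0 (leq_trans K_gt0 leKQ).
have Kv_gt0 : 0 < K * v by rewrite muln_gt0 K_gt0.
nia.
Qed.

Theorem lemma9p4 :
  exists C : nat,
    forall (dt con V : finType) (owner : con -> dt) (args : con -> seq (seq dt))
           (root : V -> dt),
      0 < maxK owner ->
      #|atomic_constraints owner args root| <=
        C * maxK owner * #|V| ^ 2 * maxD owner args
          * 2 ^ (#|V| * maxK owner * maxD owner args + maxK owner).
Proof.
exists 4 => dt con V owner args root K_gt0.
apply: leq_trans (card_atomic_constraints_le owner args root) _.
have [-> | v_gt0] := posnP #|V|; first by rewrite !mul0n muln0.
have le_sum := leq_add_mul4 v_gt0 K_gt0 (ltnW (ltn_expl _ (ltnSn 1))).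
apply: leq_trans (leq_mul (leqnn _) (leq_mul (leqnn _) le_sum)) _.
rewrite expnD -mulnn; lia.
Qed.
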